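(* The Lemke--Howson algorithm solves nondegenerate instances of the tropical Nash equilibrium complementarity problem (TNECP) within at most $2n-1$ iterations, where $n$ is the number of rows of the system.
   Context: Over the max-plus semifield $\mathbb{T}=\mathbb{R}\cup\{-\infty\}$ ($\oplus=\max$, $\odot=+$), TNECP asks, given an $n\times n$ matrix $M^-$ with no all-$(-\infty)$ column and $q^+\in\mathbb{T}^n$ with no $-\infty$ entry, for $(w,z)\in\mathbb{T}^n\times\mathbb{T}^n$ with $w\oplus M^-\odot z=q^+$, $w^\top\odot z=-\infty$, $z\neq-\infty$. The instance is nondegenerate if for each $j\in[n]$ the minimum $\min_k (q^+_k - M^-_{kj})$ is attained exactly once. Write the system as $A\odot x=b$ with $A=(I\ M^-)$ (tropical identity), columns indexed by $[n]\uplus[n]$ (blue copy for $w$, red copy for $z$; two elements are twins if same label, different colors). A tropical basis of $A\odot x=b$ ($A\in\mathbb{T}^{n\times d}$) is $B\subset[d]$ of size $n$ with a bijection $\phi:[n]\to B$ such that for each $i$, $b_i - A_{i\phi(i)}\in\mathbb{T}$ is minimal among $b_k-A_{k\phi(i)}$, $k\in[n]$. In the nondegenerate case, for a basis $B$ and $j\notin B$ there is a unique other basis contained in $B\cup\{j\}$. Fix $j^\star\in[n]$. The Lemke--Howson algorithm starts with $B=[n]\uplus\varnothing$ and entering element $\gamma=(j^\star,\text{red})$, and repeatedly: replaces $B$ by the unique basis $B'\subset B\cup\{\gamma\}$ distinct from $B$, sets $\gamma$ to the twin of the element of $B\setminus B'$, and stops when $B$ is fully labeled (all labels in $[n]$ appear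 in $B$). *)

(* Tropical (max-plus) semifield T = R u {-oo} is modelled
   as [option R] with [None] = -oo, for an arbitrary real field R. *)
From HB Require Import structures.
From mathcomp Require Import all_boot all_order all_algebra.
Set Implicit Arguments. Unset Strict Implicit. Unset Printing Implicit Defensive.
Import Order.TTheory GRing.Theory Num.Theory.
Local Open Scope ring_scope.

Section Tropical.
Variable R : realFieldType.

Definition tadd (x y : option R) : option R :=
  match x, y with
  | None, _ => y
  | _, None => x
  | Some a, Some b => Some (Num.max a b)
  end.

Definition tmul (x y : option R) : option R :=
  match x, y with
  | Some a, Some b => Some (a + b)
  | _, _ => None
  end.

(* ordinary minimum on R u {+oo}, here None = +oo (used only for the
   "ratios" b_k - A_kj, which are +oo when A_kj = -oo) *)
Definition pmin (x y : option R) : option R :=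
  match x, y with
  | None, _ => y
  | _, None => x
  | Some a, Some b => Some (Num.min a b)
  end.

Variable n : nat.

(* Column indices [n] (+) [n] : inl j = blue copy (w), inr j = red copy (z). *)
Definition elt := ('I_n + 'I_n)%type.

Definition label (e : elt) : 'I_n := match e with inl j => j | inr j => j end.

Definition twin (e : elt) : elt := match e with inl j => inr j | inr j => inl j end.

(* the matrix A = (I  M^-) with I the tropical identity *)
Definition colA (M : 'M[option R]_n) (e : elt) (k : 'I_n) : option R :=
  match e with
  | inl j => if k == j then Some 0 else None
  | inr j => M k j
  end.

(* b_k - A_ke in R u {+oo} (None = +oo) *)
Definition ratio (M : 'M[option R]_n) (q : 'I_n -> R) (e : elt) (k : 'I_n)
  : option R :=
  match colA M e k with Some c => Some (q k - c) | None => None end.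

Definition tight (M : 'M[option R]_n) (q : 'I_n -> R) (i : 'I_n) (e : elt)
  : bool :=
  match colA M e i with
  | Some a => [forall k : 'I_n,
                 match colA M e k with
                 | Some c => q i - a <= q k - c
                 | None => true
                 end]
  | None => false
  end.

Definition is_basis (M : 'M[option R]_n) (q : 'I_n -> R) (B : {set elt}) : bool :=
  (#|B| == n) &&
  [exists phi : {ffun 'I_n -> elt},
     injectiveb phi && [forall i : 'I_n, (phi i \in B) && tight M q i (phi i)]].

Definition fully_labeled (B : {set elt}) : bool :=
  [forall i : 'I_n, (inl i \in B) || (inr i \in B)].

(* state of Lemke--Howson: current basis and entering element *)
Definition lh_state := ({set elt} * elt)%type.

Definition lh_start (jstar : 'I_n) : lh_state := ([set inl i | i : 'I_n], inr jstar).

(* one iteration: B' := the (unique, under nondegeneracy) basis contained in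
   B u {gamma} distinct from B; gamma := twin of the element of B \ B'. *)
Definition lh_step (M : 'M[option R]_n) (q : 'I_n -> R) (s : lh_state)
  : option lh_state :=
  let: (B, g) := s in
  match [pick B' : {set elt} | is_basis M q B' && (B' \subset g |: B) && (B' != B)] with
  | Some B' =>
      match [pick e in B :\: B'] with
      | Some e => Some (B', twin e)
      | None => None
      end
  | None => None
  end.

Fixpoint lh_run (M : 'M[option R]_n) (q : 'I_n -> R) (jstar : 'I_n) (t : nat)
  : option lh_state :=
  match t with
  | 0 => Some (lh_start jstar)
  | t'.+1 => obind (lh_step M q) (lh_run M q jstar t')
  end.

Definition basic_point (M : 'M[option R]_n) (q : 'I_n -> R) (B : {set elt})
  (e : elt) : option R :=
  if e \in B then \big[pmin/None]_(k < n) ratio M q e k else None.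

Definition tnecp_solution (M : 'M[option R]_n) (q : 'I_n -> R)
  (w z : 'I_n -> option R) : Prop :=
  (forall k : 'I_n,
      tadd (w k) (\big[tadd/None]_(j < n) tmul (M k j) (z j)) = Some (q k))
  /\ \big[tadd/None]_(k < n) tmul (w k) (z k) = None
  /\ (exists k : 'I_n, z k != None).

Definition tnecp_nondegenerate (M : 'M[option R]_n) (q : 'I_n -> R) : Prop :=
  forall j : 'I_n, exists k0 : 'I_n, exists c0 : R,
    M k0 j = Some c0 /\
    forall (k : 'I_n) (c : R), M k j = Some c -> k != k0 -> q k0 - c0 < q k - c.

Definition no_minf_column (M : 'M[option R]_n) : Prop :=
  forall j : 'I_n, exists k : 'I_n, M k j != None.

End Tropical.

From Pilot Require Import Defs.
From HB Require Import structures.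
From mathcomp Require Import all_boot all_order all_algebra.
From mathcomp Require Import zify lra.
Set Implicit Arguments. Unset Strict Implicit. Unset Printing Implicit Defensive.
Import Order.TTheory GRing.Theory Num.Theory.
Local Open Scope ring_scope.

(* Nondegeneracy makes every column e of A = (I M^-) tight in exactly one row
   r(e), with r(inl i) = i.  Hence a basis is a set of columns meeting every
   row exactly once, and a pivot on an entering column g swaps g with the basis
   column lying on row r(g).  Starting from the blue basis, Lemke--Howson thus
   follows the orbit jstar, f jstar, f^2 jstar, ... of f j := r(inr j): after t
   pivots the red copies of f^0 jstar, ..., f^(t-1) jstar have replaced the
   blue copies of f^1 jstar, ..., f^t jstar.  Let K <= n be the length of the
   orbit.  If f^K jstar = jstar, the basis is fully labeled after K pivots.
   Otherwise f^K jstar = f^(c+1) jstar with c + 1 < K; the next pivot expels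
   the red copy of f^c jstar, and the algorithm retraces the orbit backwards,
   restoring blue f^c jstar, ..., f^1 jstar and stopping after K + c <= 2n - 1
   pivots.  The basic point of a fully labeled basis solves the TNECP: the
   tight inequalities give w (+) M z = q, and full labeling gives w^T z = -oo. *)

Section TropicalBigops.
Variable R : realFieldType.

Lemma taddA : associative (@tadd R).
Proof. by move=> [x|] [y|] [z|] //=; rewrite maxA. Qed.

Lemma taddC : commutative (@tadd R).
Proof. by move=> [x|] [y|] //=; rewrite maxC. Qed.

Lemma pminA : associative (@pmin R).
Proof. by move=> [x|] [y|] [z|] //=; rewrite minA. Qed.

Lemma pminC : commutative (@pmin R).
Proof. by move=> [x|] [y|] //=; rewrite minC. Qed.

HB.instance Definition _ :=
  Monoid.isComLaw.Build (option R) None (@tadd R) taddA taddC (fun=> erefl).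
HB.instance Definition _ :=
  Monoid.isComLaw.Build (option R) None (@pmin R) pminA pminC (fun=> erefl).

Lemma big_tadd_ub (I : finType) (P : pred I) (F : I -> option R) (v : R) :
  (forall i x, P i -> F i = Some x -> x <= v) ->
  tadd (\big[@tadd R/None]_(i | P i) F i) (Some v) = Some v.
Proof.
move=> Fv; elim/big_ind: _ => // [x y xv yv | i Pi]; first by rewrite -taddA yv.
by case Fi: (F i) => [x|] //=; rewrite max_r // (Fv _ _ Pi Fi).
Qed.

Lemma big_tadd_attained (I : finType) (F : I -> option R) (i0 : I) (v : R) :
  F i0 = Some v -> (forall i x, F i = Some x -> x <= v) ->
  \big[@tadd R/None]_i F i = Some v.
Proof.
by move=> Fi0 Fv; rewrite (bigD1 i0) //= Fi0 taddC big_tadd_ub // => i x _ /Fv.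
Qed.

Lemma big_pmin_lb (I : finType) (P : pred I) (F : I -> option R) (v : R) :
  (forall i x, P i -> F i = Some x -> v <= x) ->
  pmin (\big[@pmin R/None]_(i | P i) F i) (Some v) = Some v.
Proof.
move=> Fv; elim/big_ind: _ => // [x y xv yv | i Pi]; first by rewrite -pminA yv.
by case Fi: (F i) => [x|] //=; rewrite min_r // (Fv _ _ Pi Fi).
Qed.

Lemma big_pmin_attained (I : finType) (F : I -> option R) (i0 : I) (v : R) :
  F i0 = Some v -> (forall i x, F i = Some x -> v <= x) ->
  \big[@pmin R/None]_i F i = Some v.
Proof.
by move=> Fi0 Fv; rewrite (bigD1 i0) //= Fi0 pminC big_pmin_lb // => i x _ /Fv.
Qed.

End TropicalBigops.

Lemma card_setU1D1 (T : finType) (A : {set T}) (x y : T) :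
  x \notin A -> y \in A -> #|x |: (A :\ y)| = #|A|.
Proof.
by move=> xA yA; rewrite cardsU1 in_setD1 (negbTE xA) andbF (cardsD1 y A) yA.
Qed.

Lemma fully_labeled_label_inj n (B : {set elt n}) :
  #|B| = n -> fully_labeled B -> {in B &, injective (@label n)}.
Proof.
move=> cardB fl; apply/imset_injP; rewrite cardB.
have -> : @label n @: B = [set: 'I_n].
  apply/setP => i; rewrite inE; apply/imsetP.
  by have /orP [iB | iB] := forallP fl i; [exists (inl i) | exists (inr i)].
by rewrite cardsT card_ord.
Qed.

Section TightRows.
Variables (R : realFieldType) (n : nat) (M : 'M[option R]_n) (q : 'I_n -> R).
Hypothesis nd : tnecp_nondegenerate M q.
Implicit Types (B : {set elt n}) (e g : elt n).

Lemma tight_inl i j : tight M q i (inl j) = (i == j).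
Proof.
rewrite /tight /=; case: eqP => [->|//]; apply/forallP => k.
by case: eqP => [->|].
Qed.

Lemma tight_inrP i j :
  reflect (exists2 a, M i j = Some a & forall k c, M k j = Some c -> q i - a <= q k - c)
          (tight M q i (inr j)).
Proof.
rewrite /tight /=; case: (M i j) => [a|]; last by constructor => -[].
apply: (iffP forallP) => [le_a | [_ [<-] le_a] k]; last by case E: (M k j) => //; apply: le_a.
by exists a => // k c E; have := le_a k; rewrite /= E.
Qed.

Lemma tight_unique e : exists! i, tight M q i e.
Proof.
case: e => [j|j]; first by exists j; split => [|i]; rewrite tight_inl // => /eqP.
have [k0 [c0 [Mk0 lt_c0]]] := nd j.
exists k0; split=> [|i /tight_inrP [a Mi le_a]].
  apply/tight_inrP; exists c0 => // k c Mk.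
  have [ek | /(lt_c0 _ _ Mk)/ltW //] := eqVneq k k0.
  by move: Mk; rewrite ek Mk0 => -[->].
apply/eqP; rewrite eq_sym; apply: contraTT (le_a _ _ Mk0) => ne_i.
by rewrite -ltNge; apply: lt_c0 _ _ Mi ne_i.
Qed.

Definition tight_row (e : elt n) : 'I_n := odflt (label e) [pick i | tight M q i e].

Lemma tight_row_inl i : tight_row (inl i) = i.
Proof.
rewrite /tight_row; case: pickP => [j | /(_ i)]; last by rewrite tight_inl eqxx.
by rewrite tight_inl => /eqP.
Qed.

Lemma tight_rowE e i : tight M q i e = (i == tight_row e).
Proof.
have [i0 [ti0 uniq_i0]] := tight_unique e.
rewrite /tight_row; case: pickP => [j tj | /(_ i0)]; last by rewrite ti0.
by apply/idP/eqP => [/uniq_i0 <- | ->] //; apply: uniq_i0.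
Qed.

Lemma tight_row_inr j :
  exists2 a, M (tight_row (inr j)) j = Some a &
    forall k c, M k j = Some c -> q (tight_row (inr j)) - a <= q k - c.
Proof. by apply/tight_inrP; rewrite tight_rowE. Qed.

Definition row_bijective (B : {set elt n}) : Prop :=
  {in B &, injective tight_row} /\ forall i, exists2 e, e \in B & tight_row e = i.

Lemma is_basisP B : is_basis M q B <-> row_bijective B.
Proof.
split.
  case/andP => /eqP cardB /existsP [phi /andP [/injectiveP phi_inj /forallP phiP]].
  have {}phiP i : phi i \in B /\ tight_row (phi i) = i.
    by have /andP [-> /[!tight_rowE] /eqP] := phiP i.
  have -> : B = phi @: [set: 'I_n].
    apply/esym/eqP; rewrite eqEcard card_imset // cardsT card_ord cardB leqnn andbT.
    by apply/subsetP => _ /imsetP [i _ ->]; case: (phiP i).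
  split=> [_ _ /imsetP [i _ ->] /imsetP [j _ ->] | i]; last first.
    by exists (phi i); [apply: imset_f | case: (phiP i)].
  by case: (phiP i) => _ ->; case: (phiP j) => _ ->  ->.
case=> row_inj row_onto.
have cardB : #|B| = n.
  have onto : tight_row @: B = [set: 'I_n].
    by apply/setP => i; rewrite inE; have [e eB <-] := row_onto i; apply: imset_f.
  by rewrite -(card_in_imset row_inj) onto cardsT card_ord.
pose phi := [ffun i => odflt (inl i) [pick e in B | tight_row e == i]].
have phiP i : phi i \in B /\ tight_row (phi i) = i.
  rewrite /phi ffunE; case: pickP => [e /andP [eB /eqP <-] // | none].
  by have [e eB ei] := row_onto i; move: (none e); rewrite eB ei eqxx.
apply/andP; split; first by rewrite cardB.
apply/existsP; exists phi; apply/andP; split.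
  by apply/injectiveP => i j eq_ij; rewrite -(proj2 (phiP i)) eq_ij (proj2 (phiP j)).
by apply/forallP => i; case: (phiP i) => -> ri; rewrite tight_rowE ri eqxx.
Qed.

Lemma basis_card B : is_basis M q B -> #|B| = n.
Proof. by case/andP => /eqP. Qed.

Lemma is_basis_pivot B g e :
  is_basis M q B -> g \notin B -> e \in B -> tight_row e = tight_row g ->
  is_basis M q (g |: (B :\ e)).
Proof.
move=> /is_basisP [row_inj row_onto] gB eB row_eg; apply/is_basisP; split.
  have row_ne_g x : x \in B :\ e -> tight_row x != tight_row g.
    by case/setD1P => xe xB; rewrite -row_eg; apply: contra xe => /eqP/row_inj->.
  move=> x y /setU1P [-> | xB] /setU1P [-> | yB] //.
  - by move=> eq_gy; have := row_ne_g _ yB; rewrite eq_gy eqxx.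
  - by move=> eq_xg; have := row_ne_g _ xB; rewrite eq_xg eqxx.
  by case/setD1P: xB => _ xB; case/setD1P: yB => _ yB; apply: row_inj.
move=> i; have [x xB <-] := row_onto i; have [-> | xe] := eqVneq x e.
  by exists g; rewrite ?setU11.
by exists x; rewrite // setU1r // in_setD1 xe.
Qed.

Lemma is_basis_pivot_unique B B' g e :
  is_basis M q B -> is_basis M q B' -> g \notin B -> e \in B ->
  tight_row e = tight_row g -> B' \subset g |: B -> B' != B ->
  B' = g |: (B :\ e).
Proof.
move=> bB bB' gB eB row_eg sub_B' neq_B'.
have [row_inj' _] := (is_basisP B').1 bB'.
have gB' : g \in B'.
  apply: contraNT neq_B' => gB'; rewrite eqEcard !basis_card // leqnn andbT.
  by apply/subsetP => x xB'; have /setU1P [eq_xg | //] := subsetP sub_B' x xB';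
     move: gB'; rewrite -eq_xg xB'.
have eB' : e \notin B'.
  by apply: contra gB => eB'; rewrite -(row_inj' e g eB' gB' row_eg).
apply/eqP; rewrite eqEcard card_setU1D1 // !basis_card ?is_basis_pivot // leqnn andbT.
apply/subsetP => x xB'; have /setU1P [-> | xB] := subsetP sub_B' x xB'.
  exact: setU11.
by rewrite setU1r // in_setD1 xB andbT; apply: contraNneq eB' => <-.
Qed.

Lemma lh_step_pivot B g e :
  is_basis M q B -> g \notin B -> e \in B -> tight_row e = tight_row g ->
  lh_step M q (B, g) = Some (g |: (B :\ e), twin e).
Proof.
move=> bB gB eB row_eg; have bB' := is_basis_pivot bB gB eB row_eg.
rewrite /lh_step; case: pickP => [B' | /(_ (g |: (B :\ e)))]; last first.
  rewrite bB' setUS ?subD1set //=; case: eqP => // eq_B'.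
  by move: gB; rewrite -eq_B' setU11.
case/andP => /andP [bB'' sub_B'] neq_B'.
rewrite (is_basis_pivot_unique bB bB'' gB eB row_eg sub_B' neq_B').
case: pickP => [x /setDP [xB] | /(_ e)]; last first.
  have ne_eg : e != g by apply: contraNneq gB => <-.
  by rewrite in_setD in_setU1 in_setD1 eqxx (negbTE ne_eg) eB.
by rewrite in_setU1 in_setD1 xB andbT => /norP [_ /negPn /eqP ->].
Qed.

Lemma lh_run_basis jstar t B g : lh_run M q jstar t = Some (B, g) -> is_basis M q B.
Proof.
case: t => [|t] /=.
  case=> <- _; apply/is_basisP; split => [_ _ /imsetP [i _ ->] /imsetP [j _ ->] | i].
    by rewrite !tight_row_inl => ->.
  by exists (inl i); rewrite ?tight_row_inl ?imset_f.
case: (lh_run M q jstar t) => [s|//] /=; rewrite /lh_step; case: s => B0 g0.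
case: pickP => [B' /andP [/andP [bB' _] _] | //].
by case: pickP => // x _ [<- _].
Qed.

Lemma lh_run_pivot jstar t B g e B' :
  lh_run M q jstar t = Some (B, g) -> g \notin B -> e \in B ->
  tight_row e = tight_row g -> B' = g |: (B :\ e) ->
  lh_run M q jstar t.+1 = Some (B', twin e).
Proof.
move=> run gB eB row_eg ->; rewrite /= run /=.
exact: lh_step_pivot (lh_run_basis run) gB eB row_eg.
Qed.

Lemma basic_point_inl B i :
  basic_point M q B (inl i) = if inl i \in B then Some (q i) else None.
Proof.
rewrite /basic_point; case: ifP => // _; apply: (big_pmin_attained (i0 := i)).
  by rewrite /Defs.ratio /= eqxx subr0.
by move=> k x; rewrite /Defs.ratio /=; case: eqP => [-> [<-] | //]; rewrite subr0.
Qed.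

Lemma basic_point_inr B j a :
  inr j \in B -> M (tight_row (inr j)) j = Some a ->
  basic_point M q B (inr j) = Some (q (tight_row (inr j)) - a).
Proof.
move=> jB Ma; rewrite /basic_point jB.
apply: (big_pmin_attained (i0 := tight_row (inr j))); first by rewrite /Defs.ratio /= Ma.
case: (tight_row_inr j) => a'; rewrite Ma => -[<-] le_a k x.
by rewrite /Defs.ratio /=; case Mk: (M k j) => [c|] // [<-]; apply: le_a Mk.
Qed.

Lemma basic_point_red_term_le B k j x :
  tmul (M k j) (basic_point M q B (inr j)) = Some x -> x <= q k.
Proof.
have [jB | jB] := boolP (inr j \in B); last by rewrite /basic_point (negbTE jB); case: (M k j).
have [a Ma le_a] := tight_row_inr j.
rewrite (basic_point_inr jB Ma); case Mk: (M k j) => [c|] //= [<-].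
by have := le_a _ _ Mk; lra.
Qed.

Lemma basic_point_feasible B k : is_basis M q B ->
  tadd (basic_point M q B (inl k))
       (\big[@tadd R/None]_j tmul (M k j) (basic_point M q B (inr j))) = Some (q k).
Proof.
move=> /is_basisP [row_inj row_onto]; have [[i|j] eB row_e] := row_onto k.
  rewrite tight_row_inl in row_e; rewrite -row_e basic_point_inl eB taddC.
  by apply: big_tadd_ub => j x _; apply: basic_point_red_term_le.
have kB : inl k \notin B.
  by apply/negP => kB; have := row_inj _ _ kB eB; rewrite tight_row_inl row_e => /(_ erefl).
rewrite basic_point_inl (negbTE kB) /=; have [a Ma _] := tight_row_inr j.
apply: (big_tadd_attained (i0 := j)); last by move=> j' x; apply: basic_point_red_term_le.
by rewrite (basic_point_inr eB Ma); rewrite row_e in Ma *; rewrite Ma /= addrC subrK.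
Qed.

Lemma basic_point_complementary B : is_basis M q B -> fully_labeled B ->
  \big[@tadd R/None]_k tmul (basic_point M q B (inl k)) (basic_point M q B (inr k)) = None.
Proof.
move=> bB fl; have lab_inj := fully_labeled_label_inj (basis_card bB) fl.
rewrite big1 // => k _; rewrite basic_point_inl; case: ifP => // kB.
by rewrite /basic_point; case: ifP => // kB'; have := lab_inj _ _ kB kB' erefl.
Qed.

Lemma fully_labeled_basis_solution B :
  is_basis M q B -> fully_labeled B -> (exists j, inr j \in B) ->
  tnecp_solution M q (fun i => basic_point M q B (inl i))
                     (fun i => basic_point M q B (inr i)).
Proof.
move=> bB fl [j jB]; split; first by move=> k; apply: basic_point_feasible.
split; first exact: basic_point_complementary.
by exists j; have [a Ma _] := tight_row_inr j; rewrite (basic_point_inr jB Ma).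
Qed.

End TightRows.

Section LemkeHowsonWalk.
Local Open Scope nat_scope.
Variables (R : realFieldType) (n : nat) (M : 'M[option R]_n) (q : 'I_n -> R).
Hypothesis nd : tnecp_nondegenerate M q.
Variable jstar : 'I_n.
Implicit Types (B : {set elt n}) (e g : elt n).

Definition red_row (j : 'I_n) : 'I_n := tight_row M q (inr j).

Definition walk t : 'I_n := iter t red_row jstar.
Arguments walk : simpl never.
Local Notation K := (order red_row jstar).
(* [pos i] is the index of [i] on the orbit of [jstar], and [K] when [i] is
   off the orbit. *)
Local Notation pos := (findex red_row jstar).
Local Notation run := (lh_run M q jstar).

Lemma pos_walk b : b < K -> pos (walk b) = b.
Proof. exact: findex_iter. Qed.

Lemma pos_le_order i : pos i <= K.
Proof. by rewrite -size_orbit index_size. Qed.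

Lemma eq_walk i b : b < K -> (i == walk b) = (pos i == b).
Proof.
move=> bK; apply/eqP/eqP => [-> | pos_i]; first exact: pos_walk.
rewrite -pos_i /walk iter_findex // fconnect_orbit -index_mem size_orbit.
by rewrite /findex in pos_i; rewrite pos_i.
Qed.

Local Ltac walk_setP :=
  apply/setP => -[i|i]; rewrite !inE -!sum_eqE /= ?eq_walk;
  have := pos_le_order i; lia.

Definition phase1_basis t : {set elt n} :=
  [set e | match e with
           | inl i => (pos i == 0) || (t < pos i)
           | inr j => pos j < t end].

Lemma lh_run_phase1 t : t < K -> run t = Some (phase1_basis t, inr (walk t)).
Proof.
elim: t => [|t IH] tK.
  rewrite /= /lh_start; congr (Some (_, _)); apply/setP => -[i|i]; rewrite !inE /=.
    by rewrite imset_f //; case: (pos i).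
  by rewrite ltn0; apply/imsetP => -[].
apply: (lh_run_pivot nd (IH (ltnW tK)) (e := inl (walk t.+1))).
- by rewrite inE /= pos_walk ?ltnn // ltnW.
- by rewrite inE /= pos_walk // ltnSn orbT.
- by rewrite tight_row_inl.
- walk_setP.
Qed.

Lemma phase1_not_fully_labeled t : 0 < t < K -> ~~ fully_labeled (phase1_basis t).
Proof.
by move=> tK; apply/forallPn; exists (walk t); rewrite !inE /= pos_walk; lia.
Qed.

Definition lh_stops_at k B g : Prop :=
  [/\ run k = Some (B, g), fully_labeled B,
      forall t, 0 < t < k -> exists s, run t = Some s /\ ~~ fully_labeled s.1
    & exists j, inr j \in B].

Lemma lh_run_phase1_last B e :
  e \in phase1_basis K.-1 -> tight_row M q e = walk K ->
  B = inr (walk K.-1) |: (phase1_basis K.-1 :\ e) -> run K = Some (B, twin e).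
Proof.
have K_gt0 := order_gt0 red_row jstar.
move=> eB row_e defB; rewrite -(prednK K_gt0).
have K1_lt_K : K.-1 < K by rewrite prednK.
apply: (lh_run_pivot nd (lh_run_phase1 K1_lt_K) _ eB _ defB).
  by rewrite inE /= pos_walk ?ltnn.
by rewrite row_e -[RHS]/(walk K.-1.+1) prednK.
Qed.

Definition orbit_basis : {set elt n} :=
  [set e | match e with inl i => K <= pos i | inr j => pos j < K end].

Lemma lh_stops_return : walk K = jstar -> lh_stops_at K orbit_basis (inr jstar).
Proof.
have K_gt0 := order_gt0 red_row jstar.
move=> walkK; split.
- apply: (lh_run_phase1_last (e := inl (walk 0))).
  + by rewrite inE /= pos_walk.
  + by rewrite tight_row_inl walkK.
  + walk_setP.
- by apply/forallP => i; rewrite !inE /=; lia.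
- move=> t tK; exists (phase1_basis t, inr (walk t)).
  by rewrite lh_run_phase1 ?phase1_not_fully_labeled //; lia.
- by exists jstar; rewrite inE /= -[jstar]/(walk 0) pos_walk.
Qed.

Section Backtrack.
Variable c : nat.
Hypotheses (c_lt_K : c.+1 < K) (walkK : walk K = walk c.+1).

Definition backtrack_basis d : {set elt n} :=
  [set e | match e with
           | inl i => [|| pos i == 0, K <= pos i | d < pos i <= c]
           | inr j => (pos j < d) || (c < pos j < K) end].

Lemma lh_run_backtrack m :
  m <= c -> run (K + m) = Some (backtrack_basis (c - m), inl (walk (c - m))).
Proof.
elim: m => [|m IH] m_le_c.
  rewrite addn0 subn0; apply: (lh_run_phase1_last (e := inr (walk c))).
  - by rewrite inE /= pos_walk; lia.
  - by rewrite walkK.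
  - walk_setP.
have [d def_d] : exists d, c - m = d.+1 by exists (c - m.+1); lia.
have -> : c - m.+1 = d by lia.
have run_m := IH (ltnW m_le_c); rewrite def_d in run_m.
rewrite addnS; apply: (lh_run_pivot nd run_m (e := inr (walk d))).
- by rewrite inE /= pos_walk; lia.
- by rewrite inE /= pos_walk; lia.
- by rewrite tight_row_inl.
- walk_setP.
Qed.

Lemma backtrack_not_fully_labeled d : 0 < d <= c -> ~~ fully_labeled (backtrack_basis d).
Proof.
by move=> dc; apply/forallPn; exists (walk d); rewrite !inE /= pos_walk; lia.
Qed.

Lemma lh_stops_backtrack : lh_stops_at (K + c) (backtrack_basis 0) (inl jstar).
Proof.
split.
- by have := lh_run_backtrack (leqnn c); rewrite subnn.
- by apply/forallP => i; rewrite !inE /=; have := pos_le_order i; lia.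
- move=> t tKc; have [tK | Kt] := ltnP t K.
    exists (phase1_basis t, inr (walk t)).
    by rewrite lh_run_phase1 ?phase1_not_fully_labeled //; lia.
  exists (backtrack_basis (c - (t - K)), inl (walk (c - (t - K)))).
  rewrite -lh_run_backtrack ?subnKC ?backtrack_not_fully_labeled //; lia.
- by exists (walk c.+1); rewrite inE /= pos_walk; lia.
Qed.

End Backtrack.

Lemma lh_stops_within : exists k B g, 0 < k <= (2 * n).-1 /\ lh_stops_at k B g.
Proof.
have K_gt0 := order_gt0 red_row jstar.
have K_le_n : K <= n by rewrite -[X in _ <= X]card_ord max_card.
have /trajectP [c c_lt_K walkK] := looping_order red_row jstar.
case: c => [|c] in c_lt_K walkK *.
  by exists K, orbit_basis, (inr jstar); split; [lia | apply: lh_stops_return].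
exists (K + c), (backtrack_basis c 0), (inl jstar).
by split; [lia | apply: lh_stops_backtrack].
Qed.

End LemkeHowsonWalk.

Theorem theorem1p3 (R : realFieldType) (n : nat) (M : 'M[option R]_n)
  (q : 'I_n -> R) (jstar : 'I_n) :
  no_minf_column M -> tnecp_nondegenerate M q ->
  exists (k : nat) (B : {set elt n}) (g : elt n),
    [/\ (0 < k <= (2 * n).-1)%N,
        lh_run M q jstar k = Some (B, g),
        fully_labeled B,
        (forall t : nat, (0 < t < k)%N ->
           exists s, lh_run M q jstar t = Some s /\ ~~ fully_labeled s.1) &
        tnecp_solution M q (fun i => basic_point M q B (inl i))
                           (fun i => basic_point M q B (inr i))].
Proof.
(* [no_minf_column M] is implied by nondegeneracy, which provides a finite
   entry in every column. *)
move=> _ nd.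
have [k [B [g [k_bound [run fl not_fl red]]]]] := lh_stops_within nd jstar.
exists k, B, g; split => //.
exact: (fully_labeled_basis_solution nd (lh_run_basis nd run) fl red).
Qed.
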